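(* Let $X$ be a Tychonoff space and let $cX$, $dX$ be compactifications of $X$ with $dX\preceq cX$, witnessed by a continuous map $\varphi: cX\to dX$. Suppose $X$ is an $F_{\sigma\delta}$ subset of $cX$. Then $X$ is an $F_{\sigma\delta}$ subset of $dX$ if and only if there exists a sequence $(H_n)_{n\in\mathbb N}$ of $F_\sigma$ subsets of $cX$ such that for every $F\in\mathcal F(cX,dX)$ there is $n\in\mathbb N$ with $X\subset H_n\subset cX\setminus F$.
   Context: A compactification of $X$ is a pair $(cX,\varphi_c)$ with $cX$ compact Hausdorff and $\varphi_c$ a homeomorphic embedding of $X$ onto a dense subspace of $cX$; we identify $X$ with its image in $cX$ (and in $dX$). We write $dX\preceq cX$ (i.e. $cX$ is larger than $dX$) if there exists a continuous map $\varphi:cX\to dX$ with $\varphi_d=\varphi\circ\varphi_c$. For such $\varphi$, $\mathcal F(cX,dX):=\{\varphi^{-1}(x) : x\in dX,\ \varphi^{-1}(x)\text{ is not a singleton}\}$. An $F_{\sigma\delta}$ set is a countable intersection of $F_\sigma$ sets. *)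

From HB Require Import structures.
From mathcomp Require Import all_boot all_order all_algebra.
From mathcomp Require Import all_classical all_reals all_analysis.
From mathcomp Require Import borel_hierarchy.
Set Implicit Arguments. Unset Strict Implicit. Unset Printing Implicit Defensive.
Local Open Scope classical_set_scope.

Definition tychonoff_space (T : topologicalType) : Prop :=
  completely_regular_space T /\ hausdorff_space T.

Definition homeomorphic_embedding (X Y : topologicalType) (e : X -> Y) : Prop :=
  continuous e /\ injective e /\
  (forall U : set X, open U -> exists V : set Y, open V /\ e @` U = V `&` range e).

Definition compactification (X Y : topologicalType) (e : X -> Y) : Prop :=
  compact [set: Y] /\ hausdorff_space Y /\ homeomorphic_embedding e /\ dense (range e).

Definition Fsigmadelta (T : topologicalType) (S : set T) : Prop :=
  exists2 G : (set T)^nat, (forall i, Fsigma (G i)) & S = \bigcap_i G i.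

Definition is_singleton (T : Type) (A : set T) : Prop := exists y, A = [set y].

From HB Require Import structures.
From mathcomp Require Import all_boot all_order all_algebra.
From mathcomp Require Import all_classical all_reals all_analysis.
From mathcomp Require Import borel_hierarchy.
Local Open Scope classical_set_scope.

(* Since X is dense in cX and embedded in dX, the fibre of phi over a point
   of X is that single point, so X = phi(X) and a point of dX lies outside X
   exactly when its fibre misses X.  If X = \bigcap_n G_n in dX, the
   preimages of the G_n are the required F_sigma sets.  Conversely, if
   X = \bigcap_n K_n in cX, then X is the intersection in dX of the images of
   the K_n and of those H_n that contain X: a singleton fibre outside X is
   missed by some K_n, every other fibre by some H_n.  These images are
   F_sigma because cX is compact and dX Hausdorff. *)

Lemma preimage_Fsigma (T U : topologicalType) (f : T -> U) (S : set U) :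
  continuous f -> Fsigma S -> Fsigma (f @^-1` S).
Proof.
move=> cf [F cF ->]; exists (fun i => f @^-1` F i).
  by move=> i; apply: (proj1 (continuous_closedP f) cf).
by rewrite preimage_bigcup.
Qed.

Lemma compact_image_Fsigma (T U : topologicalType) (f : T -> U) (S : set T) :
  compact [set: T] -> hausdorff_space U -> continuous f -> Fsigma S ->
  Fsigma (f @` S).
Proof.
move=> cT hU cf [F cF ->]; exists (fun i => f @` F i); last first.
  by rewrite image_bigcup.
move=> i; apply: compact_closed => //; apply: continuous_compact.
  exact: continuous_subspaceT.
exact: subclosed_compact (cF i) cT _.
Qed.

Lemma Fsigmadelta_bigcap (T : topologicalType) (I : countType)
    (G : I -> set T) :
  (forall i, Fsigma (G i)) -> Fsigmadelta (\bigcap_i G i).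
Proof.
move=> fG; exists (fun n => if unpickle n is Some i then G i else setT).
  by move=> n; case: (unpickle n) => [i|]; [exact: fG | exact: closed_Fsigma].
apply/seteqP; split=> [t Gt n _ | t Gt i _].
  by case: (unpickle n) => // i; exact: Gt.
by move: (Gt (pickle i)); rewrite pickleK; apply.
Qed.

Lemma image_eq_bigcap_images (T U I : Type) (f : T -> U) (A : set T)
    (L : I -> set T) :
  (forall i, A `<=` L i) ->
  (forall u, ~ (f @` A) u -> exists i, L i `<=` ~` (f @^-1` [set u])) ->
  f @` A = \bigcap_i f @` L i.
Proof.
move=> AL sepL; apply/seteqP; split=> [_ [t At <-] i _ | u Lu].
  by exists t => //; exact: AL.
apply: contrapT => /sepL [i Li].
by have [t /Li + ftu] := Lu i Logic.I.
Qed.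

Section Compactifications.
Variables (X cX dX : topologicalType).
Variables (ec : X -> cX) (ed : X -> dX) (phi : cX -> dX).
Hypothesis edE : ed = phi \o ec.

Definition separates_nontrivial_fibres (H : (set cX)^nat) : Prop :=
  forall x : dX, ~ is_singleton (phi @^-1` [set x]) ->
    exists n, range ec `<=` H n /\ H n `<=` ~` (phi @^-1` [set x]).

Section EmbeddedFibres.
Hypotheses (hcX : hausdorff_space cX) (cec : continuous ec)
  (dec : dense (range ec)) (ied : injective ed)
  (embd : forall U : set X, open U ->
    exists V : set dX, open V /\ ed @` U = V `&` range ed)
  (cphi : continuous phi).

(* If phi y = ed a with y <> ec a, separate them by open U, V; the trace of
   V on X is the trace of an open W of dX, and a point of X in U near y is
   sent into W by phi, hence lies in V too. *)
Lemma fibre_ed (a : X) : phi @^-1` [set ed a] = [set ec a].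
Proof.
apply/seteqP; split=> [y /= phiy | _ ->]; last by rewrite /= edE.
apply: contrapT => /eqP nya.
move: hcX; rewrite open_hausdorff => /(_ _ _ nya).
move=> [[U V] /= [Uy Va] [oU oV /eqP UV0]].
have [W [oW EW]] := embd (ec @^-1` V) (proj1 (continuousP ec) cec _ oV).
have Wa : W (ed a).
  have : (ed @` (ec @^-1` V)) (ed a) by exists a => //; rewrite /= -inE.
  by rewrite EW => -[].
have oUW : open (phi @^-1` W `&` U).
  by apply: openI => //; exact: (proj1 (continuousP phi) cphi).
have [z [[Wz Uz] [b _ ebz]]] : (phi @^-1` W `&` U `&` range ec) !=set0.
  by apply: dec oUW; exists y; split; [rewrite /= phiy | exact: set_mem].
rewrite -ebz in Wz Uz.
have : (W `&` range ed) (ed b) by split; [rewrite edE | exists b].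
rewrite -EW => -[c Vc /ied cb]; subst c.
have : (U `&` V) (ec b) by [].
by rewrite UV0.
Qed.

Lemma nontrivial_fibre_notin_range (x : dX) :
  ~ is_singleton (phi @^-1` [set x]) -> ~ range ed x.
Proof.
by move=> nsx [a _ eax]; apply: nsx; exists (ec a); rewrite -eax fibre_ed.
Qed.

Lemma separating_Fsigma_of_Fsigmadelta_range :
  Fsigmadelta (range ed) ->
  exists H : (set cX)^nat, (forall n, Fsigma (H n)) /\
    separates_nontrivial_fibres H.
Proof.
move=> [G fG eG]; exists (fun n => phi @^-1` G n); split.
  by move=> n; exact: preimage_Fsigma.
move=> x /nontrivial_fibre_notin_range.
rewrite eG => /existsNP [n /not_implyP [_ nGx]].
exists n; split=> [_ [a _ <-] | y /= Gy phiy]; last first.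
  by apply: nGx; rewrite -phiy.
have : (\bigcap_i G i) (ed a) by rewrite -eG; exists a.
by move=> /(_ n I); rewrite edE.
Qed.

End EmbeddedFibres.

Lemma Fsigmadelta_range_of_separating_Fsigma (H : (set cX)^nat) :
  compact [set: cX] -> hausdorff_space dX -> continuous phi ->
  Fsigmadelta (range ec) ->
  (forall n, Fsigma (H n)) -> separates_nontrivial_fibres H ->
  Fsigmadelta (range ed).
Proof.
move=> ccX hdX cphi [K fK eK] fH sepH.
pose H' n := if `[< range ec `<=` H n >] then H n else setT.
pose L (i : nat + nat) := match i with inl m => K m | inr n => H' n end.
have LF i : Fsigma (phi @` L i).
  apply: compact_image_Fsigma => //; case: i => [m|n] //=.
  by rewrite /H'; case: ifP => _ //; exact: closed_Fsigma.
suff -> : range ed = \bigcap_i phi @` L i by exact: Fsigmadelta_bigcap.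
rewrite edE -(image_comp ec phi); apply: image_eq_bigcap_images.
  case=> [m|n] /=; first by rewrite eK; exact: bigcap_inf.
  by rewrite /H'; case: ifP => // /asboolP.
move=> u nu; have [[y fy]|nsu] := pselect (is_singleton (phi @^-1` [set u])).
  have nKy : ~ (\bigcap_i K i) y.
    rewrite -eK => -[a _ eay]; apply: nu; exists (ec a); first by exists a.
    by rewrite eay; have : (phi @^-1` [set u]) y by rewrite fy.
  have [m /not_implyP [_ nKmy]] := (existsNP _).2 nKy.
  exists (inl m) => z Kz phiz; apply: nKmy.
  by have : (phi @^-1` [set u]) z := phiz; rewrite fy => <-.
have [n [sub Hn]] := sepH u nsu.
by exists (inr n); rewrite /= /H' asboolT.
Qed.

End Compactifications.

Theorem proposition3p2 (X cX dX : topologicalType)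
  (ec : X -> cX) (ed : X -> dX) (phi : cX -> dX) :
  tychonoff_space X ->
  compactification ec -> compactification ed ->
  continuous phi -> ed = phi \o ec ->
  Fsigmadelta (range ec) ->
  (Fsigmadelta (range ed) <->
   exists H : (set cX)^nat, (forall n, Fsigma (H n)) /\
     forall x : dX, ~ is_singleton (phi @^-1` [set x]) ->
       exists n, range ec `<=` H n /\ H n `<=` ~` (phi @^-1` [set x])).
Proof.
(* Tychonoff-ness only guarantees that compactifications exist. *)
move=> _ [ccX [hcX [[cec _] dec]]] [_ [hdX [[_ [ied embd]] _]]] cphi edE fX.
split; first exact: separating_Fsigma_of_Fsigmadelta_range.
by move=> [H [fH sepH]]; exact: Fsigmadelta_range_of_separating_Fsigma sepH.
Qed.
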